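(* Let $Q$ be a quadrilateral in $K^2$. (1) The midpoint $\mathrm{mid}_Q(\ell)$ is finite (not at infinity) for all bisectors $\ell$ of $Q$. (2) A line $\ell$ passing through a vertex of $Q$ bisects $Q$ if and only if it is a side of $Q$ or a diagonal of $Q$. (3) Two distinct parallel lines are bisectors of $Q$ if and only if these lines are parallel to a pair of parallel sides of $Q$ or to the diagonals of $Q$ when these are parallel. (4) All lines parallel to a pair of parallel sides of $Q$, or to the diagonals of $Q$ when these are parallel, bisect $Q$.
   Context: $K$ is a field of characteristic $\neq 2$; we work in $K^2$ inside the projective plane. A quadrilateral $Q=ABA'B'$ consists of four distinct lines $A,B,A',B'$ (sides), not all through one point, with adjacent sides ($A,B$; $B,A'$; $A',B'$; $B',A$) not parallel; opposite sides ($A,A'$; $B,B'$) may be parallel. Vertices: $A\cap B$, $B\cap A'$, $A'\cap B'$, $B'\cap A$ (two may coincide if three sides are concurrent). Diagonals: the lines through nonadjacent vertices. Here ''parallel to'' a line includes being equal to it. A line $\ell$ crosses a pair $\{\ell_1,\ell_2\}$ if it is distinct from both and not parallel to both; $\mathrm{mid}_{\{\ell_1,\ell_2\}}(\ell)$ is the midpoint of the points where $\ell$ meets $\ell_1,\ell_2$, defined to be the point at infinity of $\ell$ if one of these points is at infinity. $\ell$ bisects $Q$ (is a bisector of $Q$) if $\mathrm{mid}_{\mathsf P}(\ell)$ is the same for all pairs $\mathsf P$ among $\{A,A'\},\{B,B'\}$ that $\ell$ crosses; this common point is $\mathrm{mid}_Q(\ell)$, the midpoint of the bisector. *)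

From mathcomp Require Import all_boot all_algebra.
Set Implicit Arguments. Unset Strict Implicit. Unset Printing Implicit Defensive.
Import GRing.Theory.
Local Open Scope ring_scope.

Section Plane.
Variable K : fieldType.

Definition pt := (K * K)%type.

Definition is_line (l : pt -> Prop) : Prop :=
  exists a b c : K, (a != 0 \/ b != 0) /\
    forall p : pt, l p <-> a * p.1 + b * p.2 = c.

Definition eql (l m : pt -> Prop) : Prop := forall p, l p <-> m p.

Definition par (l m : pt -> Prop) : Prop :=
  eql l m \/ (forall p, ~ (l p /\ m p)).

(* Quadrilateral Q = A B A' B' (sides in this cyclic order) *)
Definition quadrilateral (A B A' B' : pt -> Prop) : Prop :=
  [/\ is_line A, is_line B, is_line A' & is_line B'] /\
  (~ eql A B /\ ~ eql A A' /\ ~ eql A B' /\ ~ eql B A' /\ ~ eql B B' /\ ~ eql A' B') /\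
  ~ (exists p, A p /\ B p /\ A' p /\ B' p) /\
  [/\ ~ par A B, ~ par B A', ~ par A' B' & ~ par B' A].

Definition is_vertex (A B A' B' : pt -> Prop) (p : pt) : Prop :=
  (A p /\ B p) \/ (B p /\ A' p) \/ (A' p /\ B' p) \/ (B' p /\ A p).

Definition is_side (A B A' B' : pt -> Prop) (l : pt -> Prop) : Prop :=
  eql l A \/ eql l B \/ eql l A' \/ eql l B'.

Definition diag1 (A B A' B' : pt -> Prop) (d : pt -> Prop) : Prop :=
  is_line d /\ exists p q, A p /\ B p /\ A' q /\ B' q /\ d p /\ d q.

Definition diag2 (A B A' B' : pt -> Prop) (d : pt -> Prop) : Prop :=
  is_line d /\ exists p q, B p /\ A' p /\ B' q /\ A q /\ d p /\ d q.

Definition is_diagonal (A B A' B' : pt -> Prop) (d : pt -> Prop) : Prop :=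
  diag1 A B A' B' d \/ diag2 A B A' B' d.

Definition crosses (l l1 l2 : pt -> Prop) : Prop :=
  ~ eql l l1 /\ ~ eql l l2 /\ ~ (par l l1 /\ par l l2).

Definition midpt (p q : pt) : pt := ((p.1 + q.1) / 2, (p.2 + q.2) / 2).

(* mid_{l1,l2}(l) = m, where m : option pt; [None] stands for the point at
   infinity of l (the only point at infinity that can occur for a given l),
   [Some p] for the affine point p. *)
Definition mid (l l1 l2 : pt -> Prop) (m : option pt) : Prop :=
  ((par l l1 \/ par l l2) /\ m = None) \/
  (~ par l l1 /\ ~ par l l2 /\
   exists p1 p2, l p1 /\ l1 p1 /\ l p2 /\ l2 p2 /\ m = Some (midpt p1 p2)).

Definition bisects (A B A' B' : pt -> Prop) (l : pt -> Prop) : Prop :=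
  is_line l /\
  (crosses l A A' -> crosses l B B' ->
   forall m1 m2, mid l A A' m1 -> mid l B B' m2 -> m1 = m2).

Definition midQ (A B A' B' : pt -> Prop) (l : pt -> Prop) (m : option pt) : Prop :=
  bisects A B A' B' l /\
  ((crosses l A A' /\ mid l A A' m) \/ (crosses l B B' /\ mid l B B' m)).

Definition special_dir (A B A' B' : pt -> Prop) (l : pt -> Prop) : Prop :=
  (par A A' /\ par l A) \/ (par B B' /\ par l B) \/
  (exists d1 d2, diag1 A B A' B' d1 /\ diag2 A B A' B' d2 /\ par d1 d2 /\ par l d1).

End Plane.

(* Fix a direction and write the lines of that direction as the level sets
   a x + b y = k. If no side of Q has this direction, the point where the
   level-k line meets a side depends affinely on k, hence so does the defect
   (l∩A + l∩A') - (l∩B + l∩B'), and the level-k line bisects Q exactly when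
   the defect vanishes. Two distinct parallel bisectors therefore make every
   line of their direction a bisector; the one through the vertex A∩B must then
   pass through A'∩B', and the one through B∩A' through B'∩A, so both
   diagonals have that direction. Conversely, when the diagonals are parallel
   the defect vanishes on both of them, hence everywhere. A line parallel to
   one side of a pair but not to the other has its midpoint at infinity on
   that pair and a finite one on the other pair: this settles (1), the
   directions of the sides in (3), and (2), where a bisector through a vertex
   meets both opposite sides, at the same point since both midpoints are
   taken with that vertex. *)

From mathcomp Require Import all_boot all_algebra ring.
From Stdlib Require Import Classical.
Set Implicit Arguments. Unset Strict Implicit. Unset Printing Implicit Defensive.
Import GRing.Theory.
Local Open Scope ring_scope.

Section Plane.
Variable K : fieldType.
Implicit Types (l m S X Y d : pt K -> Prop) (p q : pt K) (a b c k t : K).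

Lemma det2_eq0 (a1 b1 a2 b2 x y : K) :
  a1 * x + b1 * y = 0 -> a2 * x + b2 * y = 0 -> x != 0 \/ y != 0 ->
  a1 * b2 - a2 * b1 = 0.
Proof.
move=> e1 e2 [nz|nz].
  have : x * (a1 * b2 - a2 * b1) = b2 * (a1 * x + b1 * y) - b1 * (a2 * x + b2 * y).
    by ring.
  by rewrite e1 e2 !mulr0 subr0 => /eqP; rewrite mulf_eq0 (negbTE nz) => /eqP.
have : y * (a1 * b2 - a2 * b1) = a1 * (a2 * x + b2 * y) - a2 * (a1 * x + b1 * y).
  by ring.
by rewrite e1 e2 !mulr0 subr0 => /eqP; rewrite mulf_eq0 (negbTE nz) => /eqP.
Qed.

Lemma det2_eq0_root (a1 b1 a2 b2 x y : K) :
  a1 * b2 - a2 * b1 = 0 -> a1 != 0 \/ b1 != 0 -> a1 * x + b1 * y = 0 ->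
  a2 * x + b2 * y = 0.
Proof.
move=> D [nz|nz] e.
  have : a1 * (a2 * x + b2 * y) = a2 * (a1 * x + b1 * y) + y * (a1 * b2 - a2 * b1).
    by ring.
  by rewrite e D !mulr0 addr0 => /eqP; rewrite mulf_eq0 (negbTE nz) => /eqP.
have : b1 * (a2 * x + b2 * y) = b2 * (a1 * x + b1 * y) - x * (a1 * b2 - a2 * b1).
  by ring.
by rewrite e D !mulr0 subr0 => /eqP; rewrite mulf_eq0 (negbTE nz) => /eqP.
Qed.

Definition lvl a b p := a * p.1 + b * p.2.

Definition lin a b c : pt K -> Prop := fun p => lvl a b p = c.

Lemma line_lin l : is_line l -> exists a b c, (a != 0 \/ b != 0) /\ eql l (lin a b c).
Proof. by []. Qed.

Lemma lin_line a b c : a != 0 \/ b != 0 -> is_line (lin a b c).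
Proof. by move=> nab; exists a, b, c. Qed.

Lemma line_pt l : is_line l -> exists p, l p.
Proof.
case=> a [b [c [[nz|nz] E]]].
  by exists (c / a, 0); apply/E => /=; field.
by exists (0, c / b); apply/E => /=; field.
Qed.

Lemma eql_refl l : eql l l.
Proof. by []. Qed.

Lemma eql_sym l m : eql l m -> eql m l.
Proof. by move=> E p; split=> /E. Qed.

Lemma eql_trans l m S : eql l m -> eql m S -> eql l S.
Proof. by move=> E1 E2 p; split=> [/E1/E2 | /E2/E1]. Qed.

Lemma eql_par l m : eql l m -> par l m.
Proof. by left. Qed.

Lemma npar_neql l m : ~ par l m -> ~ eql l m.
Proof. by move=> nlm /eql_par. Qed.

Lemma par_sym l m : par l m -> par m l.
Proof. by case=> [E | h]; [left; apply: eql_sym | right=> p [mp lp]; apply: (h p)]. Qed.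

Lemma neql_sym l m : ~ eql l m -> ~ eql m l.
Proof. by move=> nlm e; apply: nlm; apply: eql_sym. Qed.

Lemma npar_sym l m : ~ par l m -> ~ par m l.
Proof. by move=> nlm e; apply: nlm; apply: par_sym. Qed.

Lemma par_eql l l' m m' : eql l l' -> eql m m' -> par l m -> par l' m'.
Proof.
move=> El Em [E | h]; first by left; apply: eql_trans (eql_trans (eql_sym El) E) Em.
by right=> p [/El lp /Em mp]; apply: (h p).
Qed.

Lemma par_meet_eql l m p : par l m -> l p -> m p -> eql l m.
Proof. by case=> // h lp mp; case: (h p). Qed.

Lemma npar_meet l m : ~ par l m -> exists p, l p /\ m p.
Proof. by move=> nlm; apply: NNPP => nex; apply: nlm; right=> p lmp; apply: nex; exists p. Qed.

Lemma par_lin_lin a b k k' : par (lin a b k) (lin a b k').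
Proof.
case: (eqVneq k k') => [-> | nk]; first by left.
by right=> p [kp k'p]; case/eqP: nk; rewrite -kp -k'p.
Qed.

Lemma par_linP a1 b1 c1 a2 b2 c2 :
  a1 != 0 \/ b1 != 0 -> a2 != 0 \/ b2 != 0 ->
  par (lin a1 b1 c1) (lin a2 b2 c2) <-> a1 * b2 - a2 * b1 = 0.
Proof.
rewrite /lin /lvl => nz1 nz2; split=> [hpar | D].
  apply: NNPP => /eqP D.
  pose p0 := ((c1 * b2 - c2 * b1) / (a1 * b2 - a2 * b1),
              (a1 * c2 - a2 * c1) / (a1 * b2 - a2 * b1)).
  have l0 : a1 * p0.1 + b1 * p0.2 = c1 by rewrite /=; field.
  have m0 : a2 * p0.1 + b2 * p0.2 = c2 by rewrite /=; field.
  (* stepping along the direction (-b1, a1) stays on the first line only *)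
  have l1 : a1 * (p0.1 - b1) + b1 * (p0.2 + a1) = c1 by rewrite -l0; ring.
  have m1 : a2 * (p0.1 - b1) + b2 * (p0.2 + a1) = c2.
    exact: (par_meet_eql hpar l0 m0 (p0.1 - b1, p0.2 + a1)).1 l1.
  by move/eqP: D; apply; rewrite -(subrr c2) -{1}m1 -m0; ring.
have transfer a b c a' b' c' p : a * b' - a' * b = 0 -> a != 0 \/ b != 0 ->
    a * p.1 + b * p.2 = c -> a' * p.1 + b' * p.2 = c' ->
    forall q, a * q.1 + b * q.2 = c -> a' * q.1 + b' * q.2 = c'.
  move=> Dab nab lp mp q lq.
  have /(det2_eq0_root Dab nab) : a * (q.1 - p.1) + b * (q.2 - p.2) = 0.
    by rewrite -(subrr c) -{1}lq -lp; ring.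
  by rewrite -mp => e; apply/eqP; rewrite -subr_eq0 -e; apply/eqP; ring.
case: (classic (exists p, a1 * p.1 + b1 * p.2 = c1 /\ a2 * p.1 + b2 * p.2 = c2)).
  move=> [p [lp mp]]; left=> q; split; first exact: transfer D nz1 lp mp q.
  by apply: transfer mp lp q => //; rewrite -oppr0 -D; ring.
by move=> nex; right=> p lmp; apply: nex; exists p.
Qed.

Lemma par_trans l m S : is_line l -> is_line m -> is_line S ->
  par l m -> par m S -> par l S.
Proof.
move=> /line_lin[a1 [b1 [c1 [nz1 E1]]]] /line_lin[a2 [b2 [c2 [nz2 E2]]]].
move=> /line_lin[a3 [b3 [c3 [nz3 E3]]]].
move=> /(par_eql E1 E2)/(par_linP _ _ nz1 nz2) D12.
move=> /(par_eql E2 E3)/(par_linP _ _ nz2 nz3) D23.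
apply: par_eql (eql_sym E1) (eql_sym E3) _; apply/par_linP => //.
(* (-b2, a2) directs the middle line, hence the other two as well *)
apply: (det2_eq0 (x := - b2) (y := a2)).
- by rewrite -oppr0 -D12; ring.
- by rewrite -D23; ring.
- by case: nz2 => nz; [right | left; rewrite oppr_eq0].
Qed.

Lemma meet_uniq l m p q : is_line l -> is_line m -> ~ eql l m ->
  l p -> m p -> l q -> m q -> p = q.
Proof.
move=> /line_lin[a1 [b1 [c1 [nz1 E1]]]] /line_lin[a2 [b2 [c2 [nz2 E2]]]] nlm.
move=> lp mp lq mq; apply: NNPP => npq; apply: nlm; apply: (par_meet_eql _ lp mp).
apply: par_eql (eql_sym E1) (eql_sym E2) _; apply/par_linP => //.
move: lp mp lq mq => /E1 lp /E2 mp /E1 lq /E2 mq.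
apply: (det2_eq0 (x := p.1 - q.1) (y := p.2 - q.2)).
- by rewrite -(subrr c1) -{1}lp -lq /lvl; ring.
- by rewrite -(subrr c2) -{1}mp -mq /lvl; ring.
case: p q npq {lp mp lq mq} => [x1 y1] [x2 y2] /= npq; rewrite !subr_eq0.
by case: (eqVneq x1 x2) => [e1 | ]; [right; apply/eqP => e2; apply: npq; rewrite e1 e2 | left].
Qed.

Lemma npar_meet_uniq l m p q : is_line l -> is_line m -> ~ par l m ->
  l p -> m p -> l q -> m q -> p = q.
Proof. by move=> Ll Lm /npar_neql; apply: meet_uniq. Qed.

Lemma npar_par_trans l X S : is_line l -> is_line X -> is_line S ->
  par l X -> ~ par X S -> ~ par l S.
Proof. by move=> Ll LX LS plX nXS plS; apply: nXS; apply: par_trans (par_sym plX) plS. Qed.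

Lemma par_lin_normal l m a b c : a != 0 \/ b != 0 -> eql l (lin a b c) ->
  is_line m -> par l m -> exists c', eql m (lin a b c').
Proof.
move=> nab E Lm plm; have [y my] := line_pt Lm.
exists (lvl a b y); apply: eql_sym; apply: par_meet_eql (erefl _) my.
apply: par_trans (lin_line _ nab) (lin_line c nab) Lm (par_lin_lin _ _ _ _) _.
exact: par_eql E (eql_refl m) plm.
Qed.

Lemma npar_level l S a b c k : a != 0 \/ b != 0 -> eql l (lin a b c) ->
  is_line S -> ~ par l S -> ~ par (lin a b k) S.
Proof.
move=> nab E LS nS pkS; apply: nS; apply: par_eql (eql_sym E) (eql_refl S) _.
exact: par_trans (lin_line c nab) (lin_line k nab) LS (par_lin_lin _ _ _ _) pkS.
Qed.

Definition lerp p q t : pt K := (p.1 + t * (q.1 - p.1), p.2 + t * (q.2 - p.2)).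

Lemma lerp_add p q p' q' t : lerp p q t + lerp p' q' t = lerp (p + p') (q + q') t.
Proof. by congr pair => /=; ring. Qed.

Lemma lvl_lerp a b p q t : lvl a b (lerp p q t) = lvl a b p + t * (lvl a b q - lvl a b p).
Proof. by rewrite /lvl /=; ring. Qed.

Lemma lerp_on S p q t : is_line S -> S p -> S q -> S (lerp p q t).
Proof.
case/line_lin=> a [b [c [_ E]]] /E Sp /E Sq.
by apply/E; rewrite /lin lvl_lerp Sp Sq subrr mulr0 addr0.
Qed.

Lemma midpt_eq p q p' q' : (2 : K) != 0 -> midpt p q = midpt p' q' <-> p + q = p' + q'.
Proof.
rewrite /midpt => h2; split=> [[e1 e2] | e].
  by congr pair => /=; [move: e1 | move: e2] => /(congr1 ( *%R^~ 2)); rewrite !mulfVK.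
by rewrite -[p.1 + q.1]/((p + q).1) -[p.2 + q.2]/((p + q).2) e.
Qed.

Lemma midptC p q : midpt p q = midpt q p.
Proof. by rewrite /midpt addrC [q.2 + _]addrC. Qed.

Lemma crosses_npar_neql l X Y : ~ par l X -> ~ eql l Y -> crosses l X Y.
Proof. by move=> nX nY; split; [exact: npar_neql | split=> // -[]]. Qed.

Lemma crosses_npar l X Y : ~ par l X -> ~ par l Y -> crosses l X Y.
Proof. by move=> nX /npar_neql; apply: crosses_npar_neql. Qed.

Lemma crosses_sym l X Y : crosses l X Y -> crosses l Y X.
Proof. by case=> nX [nY npp]; split=> //; split=> // -[pY pX]; apply: npp. Qed.

Lemma mid_exact l X Y p q : ~ par l X -> ~ par l Y ->
  l p -> X p -> l q -> Y q -> mid l X Y (Some (midpt p q)).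
Proof. by move=> nX nY lp Xp lq Yq; right; do 2!split=> //; exists p, q. Qed.

Lemma mid_Some l X Y : ~ par l X -> ~ par l Y -> exists p, mid l X Y (Some p).
Proof.
move=> nX nY; have [p [lp Xp]] := npar_meet nX; have [q [lq Yq]] := npar_meet nY.
by exists (midpt p q); apply: mid_exact.
Qed.

Lemma mid_exists l X Y : exists o, mid l X Y o.
Proof.
case: (classic (par l X \/ par l Y)) => [pXY | /not_or_and[nX nY]].
  by exists None; left.
by have [p ?] := mid_Some nX nY; exists (Some p).
Qed.

Lemma mid_NoneP l X Y o : mid l X Y o -> (o = None <-> par l X \/ par l Y).
Proof. by case=> [[pXY ->] | [nX [nY [? [? [_ [_ [_ [_ ->]]]]]]]]]; split=> // -[]. Qed.

Lemma mid_at l X Y p q o : is_line l -> is_line X -> is_line Y ->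
  ~ eql l X -> ~ eql l Y -> l p -> X p -> l q -> Y q -> mid l X Y o ->
  o = Some (midpt p q).
Proof.
move=> Ll LX LY nX nY lp Xp lq Yq [[[pX | pY] _] | [_ [_ [p' [q' [lp' [Xp' [lq' [Yq' ->]]]]]]]]].
- by case: nX; apply: par_meet_eql pX lp Xp.
- by case: nY; apply: par_meet_eql pY lq Yq.
by rewrite (meet_uniq Ll LX nX lp' Xp' lp Xp) (meet_uniq Ll LY nY lq' Yq' lq Yq).
Qed.

Lemma mid_sym l X Y o : mid l X Y o -> mid l Y X o.
Proof.
case=> [[pXY ->] | [nX [nY [p [q [lp [Xp [lq [Yq ->]]]]]]]]].
  by left; split=> //; case: pXY; [right | left].
by rewrite midptC; apply: mid_exact.
Qed.

Lemma bisects_swapA (A B A' B' : pt K -> Prop) l : bisects A B A' B' l -> bisects A' B A B' l.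
Proof.
by case=> Ll bl; split=> // cA cB o1 o2 /mid_sym h1 h2; apply: bl => //; apply: crosses_sym.
Qed.

Lemma bisects_swapB (A B A' B' : pt K -> Prop) l : bisects A B A' B' l -> bisects A B' A' B l.
Proof.
by case=> Ll bl; split=> // cA cB o1 o2 h1 /mid_sym h2; apply: bl => //; apply: crosses_sym.
Qed.

Lemma bisects_swap_pairs (A B A' B' : pt K -> Prop) l : bisects A B A' B' l -> bisects B A B' A' l.
Proof. by case=> Ll bl; split=> // cB cA o1 o2 h1 h2; symmetry; apply: bl. Qed.

Lemma bisects_par_iff (A B A' B' : pt K -> Prop) l : bisects A B A' B' l ->
  crosses l A A' -> crosses l B B' -> (par l A \/ par l A' <-> par l B \/ par l B').
Proof.
case=> _ bl cA cB; have [o1 h1] := mid_exists l A A'; have [o2 h2] := mid_exists l B B'.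
by move: (mid_NoneP h1) (mid_NoneP h2); rewrite (bl cA cB _ _ h1 h2); tauto.
Qed.

Definition balanced l (A B A' B' : pt K -> Prop) := forall pA pB pA' pB',
  l pA -> A pA -> l pB -> B pB -> l pA' -> A' pA' -> l pB' -> B' pB' ->
  pA + pA' = pB + pB'.

Lemma balanced_eql l m (A B A' B' : pt K -> Prop) :
  eql l m -> balanced l A B A' B' -> balanced m A B A' B'.
Proof. by move=> E bal pA pB pA' pB' /E ? ? /E ? ? /E ? ? /E ? ?; apply: bal. Qed.

Lemma bisects_balancedP (A B A' B' : pt K -> Prop) l : (2 : K) != 0 ->
  is_line l -> is_line A -> is_line B -> is_line A' -> is_line B' ->
  ~ par l A -> ~ par l B -> ~ par l A' -> ~ par l B' ->
  bisects A B A' B' l <-> balanced l A B A' B'.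
Proof.
move=> h2 Ll LA LB LA' LB' nA nB nA' nB'; split.
  case=> _ bl pA pB pA' pB' lA AA lB BB lA' AA' lB' BB'; apply/(midpt_eq _ _ _ _ h2).
  have [] := bl (crosses_npar nA nA') (crosses_npar nB nB') _ _
    (mid_exact nA nA' lA AA lA' AA') (mid_exact nB nB' lB BB lB' BB').
  by rewrite /midpt => -> ->.
move=> bal; split=> // cA cB o1 o2 h1 h2'.
have [pA [lA AA]] := npar_meet nA; have [pA' [lA' AA']] := npar_meet nA'.
have [pB [lB BB]] := npar_meet nB; have [pB' [lB' BB']] := npar_meet nB'.
rewrite (mid_at Ll LA LA' (npar_neql nA) (npar_neql nA') lA AA lA' AA' h1).
rewrite (mid_at Ll LB LB' (npar_neql nB) (npar_neql nB') lB BB lB' BB' h2').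
by congr Some; apply/midpt_eq => //; exact: bal.
Qed.

Section Levels.
Variables a b : K.
Hypothesis nab : a != 0 \/ b != 0.

Lemma lin_lerp p q c1 c2 k : c1 != c2 -> lin a b c1 p -> lin a b c2 q ->
  lin a b k (lerp p q ((k - c1) / (c2 - c1))).
Proof.
rewrite /lin lvl_lerp => nc -> ->; have nc' : c2 - c1 != 0 by rewrite subr_eq0 eq_sym.
by field.
Qed.

Lemma lerp_level S p q z c1 c2 k : is_line S -> ~ par (lin a b k) S ->
  S p -> S q -> S z -> lin a b c1 p -> lin a b c2 q -> lin a b k z -> c1 != c2 ->
  z = lerp p q ((k - c1) / (c2 - c1)).
Proof.
move=> LS nS Sp Sq Sz c1p c2q kz nc.
apply: (npar_meet_uniq (lin_line k nab) LS nS) => //; first exact: lin_lerp.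
exact: lerp_on.
Qed.

Lemma balanced_levels (A B A' B' : pt K -> Prop) c1 c2 k :
  is_line A -> is_line B -> is_line A' -> is_line B' ->
  ~ par (lin a b c1) A -> ~ par (lin a b c1) B ->
  ~ par (lin a b c1) A' -> ~ par (lin a b c1) B' -> c1 != c2 ->
  balanced (lin a b c1) A B A' B' -> balanced (lin a b c2) A B A' B' ->
  balanced (lin a b k) A B A' B'.
Proof.
move=> LA LB LA' LB' nA nB nA' nB' nc bal1 bal2.
pose t := (k - c1) / (c2 - c1).
have interp S z : is_line S -> ~ par (lin a b c1) S -> lin a b k z -> S z ->
    exists p q, [/\ lin a b c1 p, S p, lin a b c2 q, S q & z = lerp p q t].
  move=> LS nS kz Sz; have lev c : ~ par (lin a b c) S := npar_level nab (eql_refl _) LS nS.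
  have [p [c1p Sp]] := npar_meet nS; have [q [c2q Sq]] := npar_meet (lev c2).
  by exists p, q; split=> //; apply: lerp_level (lev k) Sp Sq Sz c1p c2q kz nc.
move=> zA zB zA' zB' kA AzA kB BzB kA' A'zA' kB' B'zB'.
have [pA [qA [c1A ApA c2A AqA ->]]] := interp _ _ LA nA kA AzA.
have [pB [qB [c1B BpB c2B BqB ->]]] := interp _ _ LB nB kB BzB.
have [pA' [qA' [c1A' A'pA' c2A' A'qA' ->]]] := interp _ _ LA' nA' kA' A'zA'.
have [pB' [qB' [c1B' B'pB' c2B' B'qB' ->]]] := interp _ _ LB' nB' kB' B'zB'.
rewrite !lerp_add (bal1 pA pB pA' pB') // (bal2 qA qB qA' qB') //.
Qed.

End Levels.

Lemma side_bisects (A B A' B' : pt K -> Prop) l :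
  is_line l -> is_side A B A' B' l -> bisects A B A' B' l.
Proof.
move=> Ll hs; split=> // cA cB.
by case: hs => [e | [e | [e | e]]]; [case: cA.1 | case: cB.1 | case: cA.2.1 | case: cB.2.1].
Qed.

Lemma diag1_swapA (A B A' B' : pt K -> Prop) d :
  diag1 A' B A B' d <-> diag2 A B A' B' d.
Proof. by split=> -[Ld [p [q ?]]]; split=> //; exists p, q; tauto. Qed.

Lemma diag2_swapA (A B A' B' : pt K -> Prop) d :
  diag2 A' B A B' d <-> diag1 A B A' B' d.
Proof. by split=> -[Ld [p [q ?]]]; split=> //; exists p, q; tauto. Qed.

Lemma diag1_swap_pairs (A B A' B' : pt K -> Prop) d :
  diag1 B A B' A' d <-> diag1 A B A' B' d.
Proof. by split=> -[Ld [p [q ?]]]; split=> //; exists p, q; tauto. Qed.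

Lemma diag2_swap_pairs (A B A' B' : pt K -> Prop) d :
  diag2 B A B' A' d <-> diag2 A B A' B' d.
Proof. by split=> -[Ld [p [q ?]]]; split=> //; exists q, p; tauto. Qed.

Lemma balanced_swapA l (A B A' B' : pt K -> Prop) :
  balanced l A' B A B' -> balanced l A B A' B'.
Proof.
by move=> bal pA pB pA' pB' lA AA lB BB lA' AA' lB' BB'; rewrite addrC; apply: bal.
Qed.

Lemma diag1_balanced (A B A' B' : pt K -> Prop) d :
  is_line A -> is_line B -> is_line A' -> is_line B' -> diag1 A B A' B' d ->
  ~ par d A -> ~ par d B -> ~ par d A' -> ~ par d B' -> balanced d A B A' B'.
Proof.
move=> LA LB LA' LB' [Ld [p [q [Ap [Bp [A'q [B'q [dp dq]]]]]]]] nA nB nA' nB'.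
move=> pA pB pA' pB' dA AA dB BB dA' AA' dB' BB'.
rewrite (npar_meet_uniq Ld LA nA dA AA dp Ap) (npar_meet_uniq Ld LB nB dB BB dp Bp).
by rewrite (npar_meet_uniq Ld LA' nA' dA' AA' dq A'q) (npar_meet_uniq Ld LB' nB' dB' BB' dq B'q).
Qed.

Section Quadrilateral.
Variables A B A' B' : pt K -> Prop.
Hypothesis hQ : quadrilateral A B A' B'.

Let lineA : is_line A. Proof. by case: hQ => -[]. Qed.
Let lineB : is_line B. Proof. by case: hQ => -[]. Qed.
Let lineA' : is_line A'. Proof. by case: hQ => -[]. Qed.
Let lineB' : is_line B'. Proof. by case: hQ => -[]. Qed.
Let neqAA' : ~ eql A A'. Proof. by case: hQ => _ [[_ []]]. Qed.
Let not_concurrent : ~ (exists p, A p /\ B p /\ A' p /\ B' p). Proof. by case: hQ => _ [_ []]. Qed.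
Let nparAB : ~ par A B. Proof. by case: hQ => _ [_ [_ []]]. Qed.
Let nparBA' : ~ par B A'. Proof. by case: hQ => _ [_ [_ []]]. Qed.
Let nparA'B' : ~ par A' B'. Proof. by case: hQ => _ [_ [_ []]]. Qed.
Let nparB'A : ~ par B' A. Proof. by case: hQ => _ [_ [_ []]]. Qed.

Lemma bisector_midQ l : bisects A B A' B' l -> exists p, midQ A B A' B' l (Some p).
Proof.
move=> bl; have Ll := bl.1.
case: (classic (par l A \/ par l A')) => [pAA' | /not_or_and[nA nA']]; last first.
  have [p hp] := mid_Some nA nA'.
  by exists p; split=> //; left; split=> //; apply: crosses_npar.
have [nB nB'] : ~ par l B /\ ~ par l B'.
  case: pAA' => [pA | pA']; split.
  - exact: npar_par_trans Ll lineA lineB pA nparAB.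
  - exact: npar_par_trans Ll lineA lineB' pA (npar_sym nparB'A).
  - exact: npar_par_trans Ll lineA' lineB pA' (npar_sym nparBA').
  - exact: npar_par_trans Ll lineA' lineB' pA' nparA'B'.
have [p hp] := mid_Some nB nB'.
by exists p; split=> //; right; split=> //; apply: crosses_npar.
Qed.

Lemma diagonal_bisects d : diag1 A B A' B' d -> bisects A B A' B' d.
Proof.
case=> Ld [p [q [Ap [Bp [A'q [B'q [dp dq]]]]]]].
split=> // -[nA [nA' _]] [nB [nB' _]] o1 o2 h1 h2.
rewrite (mid_at Ld lineA lineA' nA nA' dp Ap dq A'q h1).
by rewrite (mid_at Ld lineB lineB' nB nB' dp Bp dq B'q h2).
Qed.

Lemma bisector_through_vertex l v : (2 : K) != 0 -> is_line l ->
  l v -> A v -> B v -> ~ eql l A -> ~ eql l B -> ~ eql l A' -> ~ eql l B' ->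
  bisects A B A' B' l -> exists q, A' q /\ B' q /\ l q.
Proof.
move=> h2 Ll lv Av Bv nA nB nA' nB' bl.
have npA : ~ par l A by move=> pA; apply: nA; apply: par_meet_eql pA lv Av.
have npB : ~ par l B by move=> pB; apply: nB; apply: par_meet_eql pB lv Bv.
have parAB' := bisects_par_iff bl (crosses_npar_neql npA nA') (crosses_npar_neql npB nB').
have npA' : ~ par l A'.
  move=> pA'; have [//|pB'] : par l B \/ par l B' by apply/parAB'; right.
  by apply: nparA'B'; apply: par_trans (par_sym pA') pB'.
have npB' : ~ par l B'.
  move=> pB'; have [//|pA'] : par l A \/ par l A' by apply/parAB'; right.
  by apply: nparA'B'; apply: par_trans (par_sym pA') pB'.
have [q [lq A'q]] := npar_meet npA'; have [r [lr B'r]] := npar_meet npB'.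
have /addrI qr : v + q = v + r.
  by apply: (bisects_balancedP h2 Ll lineA lineB lineA' lineB' npA npB npA' npB').1.
by exists q; rewrite {2}qr.
Qed.

Lemma bisector_par_side l : bisects A B A' B' l -> par l A -> ~ eql l A -> par l A'.
Proof.
move=> bl pA nA; apply: NNPP => npA'; have Ll := bl.1.
have npB : ~ par l B := npar_par_trans Ll lineA lineB pA nparAB.
have npB' : ~ par l B' := npar_par_trans Ll lineA lineB' pA (npar_sym nparB'A).
have cA := crosses_sym (crosses_npar_neql npA' nA).
by case: ((bisects_par_iff bl cA (crosses_npar npB npB')).1 (or_introl pA)).
Qed.

Lemma parallel_bisectors_par_side l1 l2 : is_line l1 -> is_line l2 ->
  ~ eql l1 l2 -> par l1 l2 -> bisects A B A' B' l1 -> bisects A B A' B' l2 ->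
  par l1 A -> par A A'.
Proof.
move=> L1 L2 n12 p12 b1 b2 pA.
have [l [Ll p1l bl nA]] : exists l, [/\ is_line l, par l1 l, bisects A B A' B' l & ~ eql l A].
  case: (classic (eql l1 A)) => [e1 | n1]; last by exists l1; split=> //; left.
  by exists l2; split=> // e2; apply: n12; apply: eql_trans e1 (eql_sym e2).
have plA : par l A := par_trans Ll L1 lineA (par_sym p1l) pA.
exact: par_trans lineA Ll lineA' (par_sym plA) (bisector_par_side bl plA nA).
Qed.

Lemma parallel_bisectors_diag1 l1 l2 : (2 : K) != 0 -> is_line l1 -> is_line l2 ->
  ~ eql l1 l2 -> par l1 l2 -> bisects A B A' B' l1 -> bisects A B A' B' l2 ->
  ~ par l1 A -> ~ par l1 B -> ~ par l1 A' -> ~ par l1 B' ->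
  exists d, diag1 A B A' B' d /\ par l1 d.
Proof.
move=> h2 L1 L2 n12 p12 b1 b2 nA nB nA' nB'.
have [a [b [c1 [nab E1]]]] := line_lin L1.
have [c2 E2] := par_lin_normal nab E1 L2 p12.
have nc : c1 != c2.
  by apply/eqP=> ec; apply: n12; apply: eql_trans E1 _; rewrite ec; apply: eql_sym.
have n2 S : is_line S -> ~ par l1 S -> ~ par l2 S.
  by move=> LS; apply: npar_par_trans L2 L1 LS (par_sym p12).
have bal k : balanced (lin a b k) A B A' B'.
  apply: (balanced_levels nab _ _ _ _ _ _ _ _ nc) => //;
    try exact: npar_level nab E1 _ _.
  - apply: balanced_eql E1 _.
    exact: (bisects_balancedP h2 L1 lineA lineB lineA' lineB' nA nB nA' nB').1 b1.
  - apply: balanced_eql E2 _.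
    by apply: (bisects_balancedP h2 L2 lineA lineB lineA' lineB' _ _ _ _).1 b2; apply: n2.
have [P [AP BP]] := npar_meet nparAB.
have [q [kq A'q]] := npar_meet (npar_level (k := lvl a b P) nab E1 lineA' nA').
have [r [kr B'r]] := npar_meet (npar_level (k := lvl a b P) nab E1 lineB' nB').
have /addrI qr : P + q = P + r by apply: (bal (lvl a b P)).
exists (lin a b (lvl a b P)); split; first by split; [exact: lin_line | exists P, q; rewrite {2}qr].
exact: par_eql (eql_sym E1) (eql_refl _) (par_lin_lin _ _ _ _).
Qed.

Lemma par_diagonals_npar_side d1 d2 : diag1 A B A' B' d1 -> diag2 A B A' B' d2 ->
  par d1 d2 -> ~ par A d1.
Proof.
case=> Ld1 [P1 [P3 [AP1 [BP1 [A'P3 [B'P3 [d1P1 d1P3]]]]]]].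
case=> Ld2 [P2 [P4 [BP2 [A'P2 [B'P4 [AP4 [d2P2 d2P4]]]]]]].
move=> p12 pA1.
have E1 := par_meet_eql pA1 AP1 d1P1.
have E2 := par_meet_eql (par_trans lineA Ld1 Ld2 pA1 p12) AP4 d2P4.
have P23 := meet_uniq lineA lineA' neqAA' ((E2 P2).2 d2P2) A'P2 ((E1 P3).2 d1P3) A'P3.
by apply: not_concurrent; exists P3; rewrite -{2}P23; split; [apply/E1 | split].
Qed.

Lemma diagonals_neql d1 d2 : diag1 A B A' B' d1 -> diag2 A B A' B' d2 ->
  ~ par d1 A -> ~ par d1 B -> ~ eql d1 d2.
Proof.
case=> Ld1 [P1 [P3 [AP1 [BP1 [_ [_ [d1P1 _]]]]]]].
case=> Ld2 [P2 [P4 [BP2 [A'P2 [B'P4 [AP4 [d2P2 d2P4]]]]]]] nA nB E.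
have P12 := npar_meet_uniq Ld1 lineB nB d1P1 BP1 ((E P2).2 d2P2) BP2.
have P14 := npar_meet_uniq Ld1 lineA nA d1P1 AP1 ((E P4).2 d2P4) AP4.
by apply: not_concurrent; exists P1; rewrite {3}P12 {3}P14.
Qed.

Lemma bisects_par_diagonals d1 d2 l : (2 : K) != 0 ->
  diag1 A B A' B' d1 -> diag2 A B A' B' d2 -> par d1 d2 -> is_line l -> par l d1 ->
  ~ par l A -> ~ par l B -> ~ par l A' -> ~ par l B' -> bisects A B A' B' l.
Proof.
move=> h2 h1 h2' p12 Ll pl1 nA nB nA' nB'.
have [Ld1 Ld2] : is_line d1 /\ is_line d2 by split; [case: h1 | case: h2'].
have pl2 := par_trans Ll Ld1 Ld2 pl1 p12.
have n1 S : is_line S -> ~ par l S -> ~ par d1 S.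
  by move=> LS; apply: npar_par_trans Ld1 Ll LS (par_sym pl1).
have n2 S : is_line S -> ~ par l S -> ~ par d2 S.
  by move=> LS; apply: npar_par_trans Ld2 Ll LS (par_sym pl2).
have [a [b [c [nab E]]]] := line_lin Ll.
have [k1 E1] := par_lin_normal nab E Ld1 pl1.
have [k2 E2] := par_lin_normal nab E Ld2 pl2.
have nk : k1 != k2.
  apply/eqP=> ek; apply: (diagonals_neql h1 h2' (n1 _ lineA nA) (n1 _ lineB nB)).
  by apply: eql_trans E1 _; rewrite ek; apply: eql_sym.
apply/(bisects_balancedP h2 Ll lineA lineB lineA' lineB' nA nB nA' nB').
apply: balanced_eql (eql_sym E) _.
apply: (balanced_levels nab lineA lineB lineA' lineB' _ _ _ _ nk);
  try exact: npar_level nab E _ _.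
- by apply: balanced_eql E1 (diag1_balanced lineA lineB lineA' lineB' h1 _ _ _ _); apply: n1.
- apply: balanced_eql E2 (balanced_swapA _).
  by apply: diag1_balanced lineA' lineB lineA lineB' _ _ _ _ _; [apply/diag1_swapA | apply: n2..].
Qed.

End Quadrilateral.

Lemma quadrilateral_swapA (A B A' B' : pt K -> Prop) :
  quadrilateral A B A' B' -> quadrilateral A' B A B'.
Proof.
case=> -[LA LB LA' LB'] [[nAB [nAA' [nAB' [nBA' [nBB' nA'B']]]]] [nc [pAB pBA' pA'B' pB'A]]].
split; first by split.
split; first by do !split=> //; apply: neql_sym.
split; first by case=> p [? [? [? ?]]]; apply: nc; exists p.
by split=> //; apply: npar_sym.
Qed.

Lemma quadrilateral_swap_pairs (A B A' B' : pt K -> Prop) :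
  quadrilateral A B A' B' -> quadrilateral B A B' A'.
Proof.
case=> -[LA LB LA' LB'] [[nAB [nAA' [nAB' [nBA' [nBB' nA'B']]]]] [nc [pAB pBA' pA'B' pB'A]]].
split; first by split.
split; first by do !split=> //; apply: neql_sym.
split; first by case=> p [? [? [? ?]]]; apply: nc; exists p.
by split=> //; apply: npar_sym.
Qed.

Lemma quadrilateral_swapB (A B A' B' : pt K -> Prop) :
  quadrilateral A B A' B' -> quadrilateral A B' A' B.
Proof. by move/quadrilateral_swap_pairs/quadrilateral_swapA/quadrilateral_swap_pairs. Qed.

Lemma diagonals_npar_sides (A B A' B' : pt K -> Prop) d1 d2 l :
  quadrilateral A B A' B' -> diag1 A B A' B' d1 -> diag2 A B A' B' d2 ->
  par d1 d2 -> is_line l -> par l d1 ->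
  [/\ ~ par l A, ~ par l B, ~ par l A' & ~ par l B'].
Proof.
move=> hQ h1 h2 p12 Ll pl1; have [[LA LB LA' LB'] _] := hQ.
have [Ld1 Ld2] : is_line d1 /\ is_line d2 by split; [case: h1 | case: h2].
have nS S : is_line S -> ~ par S d1 -> ~ par l S.
  by move=> LS nS1 plS; apply: nS1; apply: par_trans LS Ll Ld1 (par_sym plS) pl1.
have nS' S : is_line S -> ~ par S d2 -> ~ par l S.
  by move=> LS nS2; apply: (nS _ LS) => pS1; apply: nS2; apply: par_trans LS Ld1 Ld2 pS1 p12.
split.
- exact: nS LA (par_diagonals_npar_side hQ h1 h2 p12).
- apply: nS LB (par_diagonals_npar_side (quadrilateral_swap_pairs hQ) _ _ p12).
  + exact/diag1_swap_pairs.
  + exact/diag2_swap_pairs.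
- apply: nS' LA' (par_diagonals_npar_side (quadrilateral_swapA hQ) _ _ (par_sym p12)).
  + exact/diag1_swapA.
  + exact/diag2_swapA.
- apply: nS' LB' (par_diagonals_npar_side
    (quadrilateral_swapA (quadrilateral_swap_pairs hQ)) _ _ (par_sym p12)).
  + exact/diag1_swapA/diag2_swap_pairs.
  + exact/diag2_swapA/diag1_swap_pairs.
Qed.

Lemma special_dir_bisects (A B A' B' : pt K -> Prop) l : (2 : K) != 0 ->
  quadrilateral A B A' B' -> is_line l -> special_dir A B A' B' l -> bisects A B A' B' l.
Proof.
move=> h2 hQ Ll; have [[LA LB LA' LB'] _] := hQ.
case=> [[pAA' plA] | [[pBB' plB] | [d1 [d2 [h1 [h2' [p12 pl1]]]]]]].
- by split=> // -[_ [_ []]]; split=> //; apply: par_trans plA pAA'.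
- by split=> // _ [_ [_ []]]; split=> //; apply: par_trans plB pBB'.
have [nA nB nA' nB'] := diagonals_npar_sides hQ h1 h2' p12 Ll pl1.
exact: (bisects_par_diagonals hQ h2 h1 h2' p12 Ll pl1 nA nB nA' nB').
Qed.

Lemma parallel_bisectors_special_dir (A B A' B' : pt K -> Prop) l1 l2 : (2 : K) != 0 ->
  quadrilateral A B A' B' -> is_line l1 -> is_line l2 -> ~ eql l1 l2 -> par l1 l2 ->
  bisects A B A' B' l1 -> bisects A B A' B' l2 -> special_dir A B A' B' l1.
Proof.
move=> h2 hQ L1 L2 n12 p12 b1 b2; have [[LA LB LA' LB'] _] := hQ.
have hQA := quadrilateral_swapA hQ; have hQP := quadrilateral_swap_pairs hQ.
have [b1A b2A] := (bisects_swapA b1, bisects_swapA b2).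
have [b1P b2P] := (bisects_swap_pairs b1, bisects_swap_pairs b2).
case: (classic (par l1 A)) => [pA | nA].
  by left; split=> //; exact: (parallel_bisectors_par_side hQ L1 L2 n12 p12 b1 b2 pA).
case: (classic (par l1 A')) => [pA' | nA'].
  have pA'A := parallel_bisectors_par_side hQA L1 L2 n12 p12 b1A b2A pA'.
  by left; split; [apply: par_sym | apply: par_trans L1 LA' LA pA' pA'A].
case: (classic (par l1 B)) => [pB | nB].
  by right; left; split=> //; exact: (parallel_bisectors_par_side hQP L1 L2 n12 p12 b1P b2P pB).
case: (classic (par l1 B')) => [pB' | nB'].
  have pB'B := parallel_bisectors_par_side (quadrilateral_swapA hQP) L1 L2 n12 p12
    (bisects_swapA b1P) (bisects_swapA b2P) pB'.
  by right; left; split; [apply: par_sym | apply: par_trans L1 LB' LB pB' pB'B].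
have [d1 [h1 pd1]] := parallel_bisectors_diag1 hQ h2 L1 L2 n12 p12 b1 b2 nA nB nA' nB'.
have [d2 [h2' pd2]] := parallel_bisectors_diag1 hQA h2 L1 L2 n12 p12 b1A b2A nA' nB nA nB'.
right; right; exists d1, d2; split=> //; split; first exact/diag1_swapA.
by split=> //; apply: par_trans h1.1 L1 h2'.1 (par_sym pd1) pd2.
Qed.

Lemma vertex_bisectsP (A B A' B' : pt K -> Prop) l v : (2 : K) != 0 ->
  quadrilateral A B A' B' -> is_line l -> is_vertex A B A' B' v -> l v ->
  bisects A B A' B' l <-> is_side A B A' B' l \/ is_diagonal A B A' B' l.
Proof.
move=> h2 hQ Ll hv lv; have hQA := quadrilateral_swapA hQ; split; last first.
  case=> [hs | [hd | hd]]; first exact: side_bisects.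
    exact: (diagonal_bisects hQ hd).
  exact/bisects_swapA/(diagonal_bisects hQA)/diag1_swapA.
move=> bl; case: (classic (is_side A B A' B' l)) => [|ns]; [by left | right].
have [nA nB nA' nB'] : [/\ ~ eql l A, ~ eql l B, ~ eql l A' & ~ eql l B'].
  by split=> e; apply: ns; [left | right; left | do 2!right; left | do 3!right].
case: hv => [[Av Bv] | [[Bv A'v] | [[A'v B'v] | [B'v Av]]]].
- have [q [A'q [B'q lq]]] := bisector_through_vertex hQ h2 Ll lv Av Bv nA nB nA' nB' bl.
  by left; split=> //; exists v, q.
- have [q [Aq [B'q lq]]] :=
    bisector_through_vertex hQA h2 Ll lv A'v Bv nA' nB nA nB' (bisects_swapA bl).
  by right; split=> //; exists v, q.
- have [q [Aq [Bq lq]]] := bisector_through_vertex (quadrilateral_swapB hQA) h2 Ll lv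
    A'v B'v nA' nB' nA nB (bisects_swapB (bisects_swapA bl)).
  by left; split=> //; exists q, v.
- have [q [A'q [Bq lq]]] := bisector_through_vertex (quadrilateral_swapB hQ) h2 Ll lv
    Av B'v nA nB' nA' nB (bisects_swapB bl).
  by right; split=> //; exists q, v.
Qed.

End Plane.

Theorem proposition3p2 (K : fieldType) (h2 : (2 : K) != 0)
  (A B A' B' : pt K -> Prop) (hQ : quadrilateral A B A' B') :
  (* (1) *)
  (forall l, bisects A B A' B' l -> exists p : pt K, midQ A B A' B' l (Some p)) /\
  (* (2) *)
  (forall l, is_line l -> (exists v, is_vertex A B A' B' v /\ l v) ->
     (bisects A B A' B' l <-> is_side A B A' B' l \/ is_diagonal A B A' B' l)) /\
  (* (3) *)
  (forall l1 l2, is_line l1 -> is_line l2 -> ~ eql l1 l2 -> par l1 l2 ->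
     (bisects A B A' B' l1 /\ bisects A B A' B' l2 <->
      special_dir A B A' B' l1 /\ special_dir A B A' B' l2)) /\
  (* (4) *)
  (forall l, is_line l -> special_dir A B A' B' l -> bisects A B A' B' l).
Proof.
split; first exact: bisector_midQ hQ.
split; first by move=> l Ll [v [hv lv]]; apply: vertex_bisectsP h2 hQ Ll hv lv.
split; last by move=> l; apply: special_dir_bisects.
move=> l1 l2 L1 L2 n12 p12; split=> [[b1 b2] | [s1 s2]].
  split; first exact: parallel_bisectors_special_dir h2 hQ L1 L2 n12 p12 b1 b2.
  exact: parallel_bisectors_special_dir h2 hQ L2 L1 (neql_sym n12) (par_sym p12) b2 b1.
by split; apply: special_dir_bisects.
Qed.
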